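(* Let $Y$ be a finite totally ordered set, $P=(T_1,T_2)$ a confluent pair of reduction operators relatively to $Y$, and $k$ an integer with $\langle T_1,T_2\rangle^k=\langle T_2,T_1\rangle^k$. Let $W$ be a subspace of $\mathbb{K}Y$ and $\{i,j\}=\{1,2\}$. If $W\subset\ker(T_i)$, then $\varphi^P(\gamma_j)|_W=(T_1\vee T_2)|_W$.
   Context: For $0\neq v\in\mathbb{K}Y$, $\mathrm{lm}(v)$ is the greatest element of $Y$ in the support of $v$; write $v<w$ if $v=0$ or $\mathrm{lm}(v)<\mathrm{lm}(w)$. A reduction operator relatively to $Y$ is a linear projector $T$ of $\mathbb{K}Y$ with $T(y)=y$ or $T(y)<y$ for each $y\in Y$. For every subspace $U$ of $\mathbb{K}Y$ there is a unique reduction operator with kernel $U$, denoted $\theta_Y^{-1}(U)$; $T_1\vee T_2=\theta_Y^{-1}(\ker T_1\cap\ker T_2)$. For endomorphisms $s,t$, $\langle t,s\rangle^k$ denotes $\cdots sts$ with $k$ factors (rightmost $s$); $(T_1,T_2)$ is confluent if $\langle T_1,T_2\rangle^k=\langle T_2,T_1\rangle^k$ for some $k$. The confluence algebra $\mathcal{A}_k$ is generated by $s_1,s_2$ with relations $s_1^2=s_1$, $s_2^2=s_2$, $\langle s_1,s_2\rangle^k=\langle s_2,s_1\rangle^k$; in it $\gamma_1=(1-s_2)\sum_{i\in I}\langle s_2,s_1\rangle^i$ and $\gamma_2=(1-s_1)\sum_{i\in I}\langle s_1,s_2\rangle^i$, where $I$ is the set of odd integers between $1$ and $k-1$. $\varphi^P:\mathcal{A}_k\to\mathrm{End}(\mathbb{K}Y)$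 is the algebra morphism $s_1\mapsto T_1$, $s_2\mapsto T_2$. *)

(* K Y is modelled as row vectors 'rV[K]_n, with Y = 'I_n
   (natural order) and basis vector y = delta_mx 0 y.  Endomorphisms are
   matrices acting on the RIGHT: T(v) := v *m T.  Hence the composite
   "s after t" (s o t) is the matrix t *m s. *)
From HB Require Import structures.
From mathcomp Require Import all_boot all_order all_algebra.
Set Implicit Arguments. Unset Strict Implicit. Unset Printing Implicit Defensive.
Import Order.TTheory GRing.Theory Num.Theory.
Local Open Scope ring_scope.

Section Reduction.
Variables (K : fieldType) (n : nat).

Definition bvec (y : 'I_n) : 'rV[K]_n := delta_mx 0 y.

Definition lm (v : 'rV[K]_n) : option 'I_n :=
  [pick i | (v 0 i != 0) && [forall j, (v 0 j != 0) ==> (j <= i)%N]].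

Definition vlt (v w : 'rV[K]_n) : bool :=
  (v == 0) ||
  (match lm v, lm w with Some a, Some b => (a < b)%N | _, _ => false end).

Definition reduction_op (T : 'M[K]_n) : Prop :=
  T *m T = T /\ forall y : 'I_n, bvec y *m T = bvec y \/ vlt (bvec y *m T) (bvec y).

Definition is_join (T1 T2 T : 'M[K]_n) : Prop :=
  reduction_op T /\ (kermx T == kermx T1 :&: kermx T2)%MS.

(* <t,s>^m = ... s t s  (m factors, rightmost s applied first) *)
Fixpoint alt (t s : 'M[K]_n) (m : nat) : 'M[K]_n :=
  match m with
  | 0 => 1%:M
  | m'.+1 => s *m alt s t m'
  end.

(* phi^P(gamma_1) = (1 - T2) o sum_{i in I} <T2,T1>^i,
   phi^P(gamma_2) = (1 - T1) o sum_{i in I} <T1,T2>^i,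
   I = odd integers in [1, k-1]. *)
Definition phi_gamma1 (T1 T2 : 'M[K]_n) (k : nat) : 'M[K]_n :=
  (\sum_(1 <= i < k | odd i) alt T2 T1 i) *m (1%:M - T2).
Definition phi_gamma2 (T1 T2 : 'M[K]_n) (k : nat) : 'M[K]_n :=
  (\sum_(1 <= i < k | odd i) alt T1 T2 i) *m (1%:M - T1).

End Reduction.

(* The reduced monomials of a reduction operator T (those y with T(y) = y)
   span its image, and they only grow when the kernel shrinks; hence every
   vector fixed by T1 or by T2 is fixed by T1 \/ T2.  For v in ker T1, the
   vector u := phi(gamma_2)(v) is a combination of such fixed vectors, it lies
   in ker T1, and T2(u) telescopes to T2(v) because the alternating products
   <T1,T2>^j(v) vanish for j >= k.  So v - u lies in ker T1 /\ ker T2 =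
   ker (T1 \/ T2), and (T1 \/ T2)(v) = (T1 \/ T2)(u) = u. *)
From HB Require Import structures.
From mathcomp Require Import all_boot all_order all_algebra.
Import GRing.Theory.
Local Open Scope ring_scope.

Set Implicit Arguments. Unset Strict Implicit.

Section ReducedMonomials.
Variables (K : fieldType) (n : nat).
Implicit Types (T J : 'M[K]_n) (x d : 'rV[K]_n) (j y : 'I_n).

Definition reduced T y := bvec K y *m T == bvec K y.

Lemma bvec_mulmxE T j y : (bvec K j *m T) 0 y = T j y.
Proof. by rewrite /bvec -rowE mxE. Qed.

Lemma lm_max x a j : lm x = Some a -> x 0 j != 0 -> (j <= a)%N.
Proof.
rewrite /lm; case: pickP => // i /andP[_ /forallP lead] [<-].
exact: (implyP (lead j)).
Qed.

Lemma lm_neq0 x a : lm x = Some a -> x 0 a != 0.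
Proof. by rewrite /lm; case: pickP => // i /andP[? _] [<-]. Qed.

Lemma reduced_entry T j y : reduced T j -> T j y = (j == y)%:R.
Proof. by move/eqP=> fixj; rewrite -bvec_mulmxE fixj /bvec mxE eq_sym. Qed.

Lemma nonreduced_entry0 T j y :
  reduction_op T -> ~~ reduced T j -> (j <= y)%N -> T j y = 0.
Proof.
move=> [_ hT] nredj le_jy; case: (hT j) => [fixj|].
  by rewrite /reduced fixj eqxx in nredj.
case/orP=> [/eqP row0|]; first by rewrite -bvec_mulmxE row0 mxE.
case lmT: lm => [a|] //; case lmj: lm => [b|] // lt_ab.
have eq_bj : b = j.
  have := lm_neq0 lmj; rewrite /bvec mxE /=.
  by case: (b =P j) => // _; rewrite mulr0n eqxx.
rewrite eq_bj in lt_ab; apply/eqP; apply: contraTT lt_ab => Tjy; rewrite -leqNgt.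
by apply: leq_trans le_jy (lm_max lmT _); rewrite bvec_mulmxE.
Qed.

Lemma reduction_op_lower T j y : reduction_op T -> (j < y)%N -> T j y = 0.
Proof.
move=> hT lt_jy; have [redj|nredj] := boolP (reduced T j).
  by rewrite (reduced_entry _ redj); case: eqP => // eq_jy; rewrite eq_jy ltnn in lt_jy.
exact: nonreduced_entry0 (ltnW lt_jy).
Qed.

Lemma ker_lead_nonreduced T d y : reduction_op T -> d *m T = 0 -> d 0 y != 0 ->
  (forall j, (y < j)%N -> d 0 j = 0) -> ~~ reduced T y.
Proof.
move=> hT dT dy above_y; apply: contra dy => redy.
have <- : (d *m T) 0 y = d 0 y.
  rewrite mxE (bigD1 y) //= (reduced_entry _ redy) eqxx mulr1 big1 ?addr0 // => j ne_jy.
  case: (ltngtP j y) => [lt_jy|lt_yj|/val_inj eq_jy]; last by rewrite eq_jy eqxx in ne_jy.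
  - by rewrite (reduction_op_lower hT lt_jy) mulr0.
  - by rewrite above_y ?mul0r.
by rewrite dT mxE.
Qed.

Lemma reduced_ker_sub T J y : reduction_op T -> reduction_op J ->
  (kermx J <= kermx T)%MS -> reduced T y -> reduced J y.
Proof.
move=> hT hJ kerJT; apply: contraTT => nredJ.
pose d := bvec K y *m (1%:M - J).
have dJ : d *m J = 0 by rewrite -mulmxA mulmxBl mul1mx hJ.1 subrr mulmx0.
have dT : d *m T = 0 by apply/sub_kermxP; apply: submx_trans kerJT; apply/sub_kermxP.
have d_entry j : (y <= j)%N -> d 0 j = (j == y)%:R.
  move=> le_yj; rewrite bvec_mulmxE !mxE.
  by rewrite (nonreduced_entry0 hJ nredJ le_yj) subr0 eq_sym.
apply: (ker_lead_nonreduced hT dT).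
  by rewrite d_entry // eqxx oner_eq0.
move=> j lt_yj; rewrite d_entry ?(ltnW lt_yj) //.
by case: eqP => // eq_jy; rewrite eq_jy ltnn in lt_yj.
Qed.

Lemma fixed_supp_reduced T x y :
  reduction_op T -> x *m T = x -> x 0 y != 0 -> reduced T y.
Proof.
move=> hT xT xy; apply: contraT => nredy.
pose P z := ~~ reduced T z && (x 0 z != 0).
case: (@arg_maxnP _ y P val) => [|z /andP[nredz xz] z_max]; first by rewrite /P nredy.
(* Column z of T vanishes on the support of x, so (x T)_z = 0. *)
move: xz; rewrite -xT mxE big1 ?eqxx // => j _.
have [redj|nredj] := boolP (reduced T j).
  rewrite (reduced_entry _ redj); case: eqP => [eq_jz|]; last by rewrite mulr0.
  by rewrite -eq_jz redj in nredz.
have [le_jz|lt_zj] := leqP j z; first by rewrite (nonreduced_entry0 hT nredj le_jz) mulr0.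
have [->|xj] := eqVneq (x 0 j) 0; first by rewrite mul0r.
by have := z_max j; rewrite /P nredj xj => /(_ isT) /=; rewrite leqNgt lt_zj.
Qed.

Lemma fixed_ker_sub T J x : reduction_op T -> reduction_op J ->
  (kermx J <= kermx T)%MS -> x *m T = x -> x *m J = x.
Proof.
move=> hT hJ kerJT xT; apply/rowP => j; rewrite -[in RHS](mulmx1 x) !mxE.
apply: eq_bigr => y _; have [->|xy] := eqVneq (x 0 y) 0; first by rewrite !mul0r.
have redJy := reduced_ker_sub hT hJ kerJT (fixed_supp_reduced hT xT xy).
by rewrite (reduced_entry _ redJy) mxE.
Qed.

Lemma is_join_sym T1 T2 J : is_join T1 T2 J -> is_join T2 T1 J.
Proof. by case=> hJ kerJ; split; rewrite // capmxC. Qed.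

Lemma is_join_ker T1 T2 J d :
  is_join T1 T2 J -> d *m T1 = 0 -> d *m T2 = 0 -> d *m J = 0.
Proof.
case=> _ /eqmxP kerJ /sub_kermxP dT1 /sub_kermxP dT2.
by apply/sub_kermxP; rewrite kerJ sub_capmx dT1 dT2.
Qed.

Lemma is_join_fixedl T1 T2 J x :
  reduction_op T1 -> is_join T1 T2 J -> x *m T1 = x -> x *m J = x.
Proof. by move=> hT1 [hJ /eqmxP kerJ]; apply: fixed_ker_sub; rewrite // kerJ capmxSl. Qed.

End ReducedMonomials.

Section AlternatingProducts.
Variables (K : fieldType) (n : nat).
Implicit Types (t s : 'M[K]_n) (v : 'rV[K]_n).

Lemma alt_recr t s m : alt t s m.+1 = alt t s m *m (if odd m then t else s).
Proof.
elim: m t s => [|m IHm] t s; first by rewrite /= mulmx1 mul1mx.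
change (alt t s m.+2) with (s *m alt s t m.+1).
rewrite IHm mulmxA /=.
by case: (odd m).
Qed.

Lemma alt_odd_idem t s i : s *m s = s -> odd i -> alt t s i *m s = alt t s i.
Proof.
by case: i => [|i] // sK; rewrite alt_recr /= => /negbTE ->; rewrite -mulmxA sK.
Qed.

Lemma alt_odd_addn2 t s i : odd i -> alt t s i.+2 = alt t s i *m t *m s.
Proof. by move=> oi; rewrite !alt_recr /= oi. Qed.

Lemma alt_ker_vanish t s k v : (0 < k)%N -> alt t s k = alt s t k ->
  v *m t = 0 -> forall j, (k <= j)%N -> v *m alt t s j = 0.
Proof.
move=> k_gt0 conf vt j /subnK <-; elim: (j - k)%N => [|i IHi].
  by rewrite add0n conf; case: k k_gt0 {conf} => //= k _; rewrite mulmxA vt mul0mx.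
by rewrite addSn alt_recr mulmxA IHi mul0mx.
Qed.

End AlternatingProducts.

Lemma sum_odd_telescope (V : zmodType) (f : nat -> V) k :
  \sum_(1 <= i < k | odd i) (f i - f i.+2) = f 1%N - f (k + ~~ odd k)%N.
Proof.
elim: k => [|[|k] IHk]; [by rewrite big_geq // subrr.. |].
rewrite big_mkcond big_nat_recr //= -big_mkcond IHk /=.
by case: (odd k); rewrite /= ?addr0 ?addn0 ?addn1 // addrA subrK.
Qed.

Lemma phi_gamma2_on_ker (K : fieldType) (n : nat) (T1 T2 J : 'M[K]_n) k (v : 'rV[K]_n) :
  reduction_op T1 -> reduction_op T2 -> is_join T1 T2 J ->
  (0 < k)%N -> alt T1 T2 k = alt T2 T1 k ->
  v *m T1 = 0 -> v *m phi_gamma2 T1 T2 k = v *m J.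
Proof.
move=> hT1 hT2 hJ k_gt0 conf vT1.
pose f i := v *m alt T1 T2 i.
have fT2 i : odd i -> f i *m T2 = f i by move=> oi; rewrite -mulmxA alt_odd_idem ?hT2.1.
set u := v *m _.
have uE : u = \sum_(1 <= i < k | odd i) (f i - f i *m T1).
  rewrite /u /phi_gamma2 mulmxA mulmx_sumr mulmx_suml.
  by apply: eq_bigr => i _; rewrite mulmxBr mulmx1.
have uT1 : u *m T1 = 0 by rewrite -!mulmxA mulmxBl mul1mx hT1.1 subrr !mulmx0.
have uT2 : u *m T2 = v *m T2.
  rewrite uE mulmx_suml (eq_bigr (fun i => f i - f i.+2)); last first.
    by move=> i oi; rewrite mulmxBl fT2 // /f alt_odd_addn2 // !mulmxA.
  rewrite sum_odd_telescope [f (_ + _)](alt_ker_vanish k_gt0 conf vT1) ?leq_addr //.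
  by rewrite subr0 /f /= mulmx1.
have uJ : u *m J = u.
  rewrite uE mulmx_suml; apply: eq_bigr => i oi.
  rewrite mulmxBl (is_join_fixedl hT2 (is_join_sym hJ) (fT2 i oi)).
  by rewrite (is_join_fixedl hT1 hJ) // -mulmxA hT1.1.
have /eqP : (v - u) *m J = 0.
  by apply: is_join_ker hJ _ _; rewrite mulmxBl ?vT1 ?uT1 ?uT2 subrr.
by rewrite mulmxBl uJ subr_eq0 => /eqP.
Qed.

Theorem lemma3p2p8 (K : fieldType) (n : nat) (T1 T2 : 'M[K]_n) (k : nat)
  (hT1 : reduction_op T1) (hT2 : reduction_op T2)
  (hk : (0 < k)%N) (hconf : alt T1 T2 k = alt T2 T1 k)
  (J : 'M[K]_n) (hJ : is_join T1 T2 J)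
  (m : nat) (W : 'M[K]_(m, n)) :
  ((W <= kermx T1)%MS ->
     forall v : 'rV[K]_n, (v <= W)%MS -> v *m phi_gamma2 T1 T2 k = v *m J) /\
  ((W <= kermx T2)%MS ->
     forall v : 'rV[K]_n, (v <= W)%MS -> v *m phi_gamma1 T1 T2 k = v *m J).
Proof.
split=> WT v vW.
  by apply: phi_gamma2_on_ker => //; apply/sub_kermxP; apply: submx_trans WT.
rewrite /phi_gamma1 -/(phi_gamma2 T2 T1 k).
apply: phi_gamma2_on_ker => //; first exact: is_join_sym.
by apply/sub_kermxP; apply: submx_trans WT.
Qed.
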